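(* Let $S$ be a $\Gamma$-hemiring, let $\mu$ be a fuzzy h-quasi-ideal of $S$ and let $x\in S$. Then $\langle x,\mu\rangle$ is a fuzzy h-quasi-ideal of $S$.
   Context: A $\Gamma$-hemiring is a pair of additive commutative semigroups with zero $S$ and $\Gamma$ with a map $S\times\Gamma\times S\to S$, $(a,\alpha,b)\mapsto a\alpha b$, such that for all $a,b,c\in S$, $\alpha,\beta\in\Gamma$: $(a+b)\alpha c=a\alpha c+b\alpha c$; $a\alpha(b+c)=a\alpha b+a\alpha c$; $a(\alpha+\beta)b=a\alpha b+a\beta b$; $a\alpha(b\beta c)=(a\alpha b)\beta c$; $0\alpha a=0=a\alpha0$; $a0b=0=b0a$. A fuzzy subset is a map $S\to[0,1]$; $\chi_S$ is the constant function $1$. For fuzzy subsets $\mu,\theta$, the generalized h-product is $(\mu\, o_h\,\theta)(x)=\sup\min_{i}\min\{\mu(a_i),\mu(c_i),\theta(b_i),\theta(d_i)\}$, the supremum over all $n\ge1$, $z,a_i,b_i,c_i,d_i\in S$, $\gamma_i,\delta_i\in\Gamma$ with $x+\sum_{i=1}^n a_i\gamma_ib_i+z=\sum_{i=1}^n c_i\delta_id_i+z$, and $(\mu\, o_h\,\theta)(x)=0$ if no such expression exists. A fuzzy subset $\mu$ is a fuzzy h-quasi-ideal if for all $x,y,a,b,z\in S$: $\mu(x+y)\ge\min\{\mu(x),\mu(y)\}$; $x+a+z=b+z$ implies $\mu(x)\ge\min\{\mu(a),\mu(b)\}$; and $\min\{(\mu\,o_h\,\chi_S)(x),(\chi_S\,o_h\,\mu)(x)\}\le\mu(x)$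 for all $x\in S$. The extension of $\mu$ by $x$ is $\langle x,\mu\rangle(y)=\inf_{s\in S,\ \alpha,\gamma\in\Gamma}\mu(x\alpha s\gamma y)$. *)

From HB Require Import structures.
From mathcomp Require Import all_boot all_order all_algebra.
From mathcomp Require Import boolp classical_sets reals.
Set Implicit Arguments. Unset Strict Implicit. Unset Printing Implicit Defensive.
Import Order.TTheory GRing.Theory Num.Theory.
Local Open Scope ring_scope.
Local Open Scope classical_set_scope.

(* A Gamma-hemiring: S and G are additive commutative monoids (nmodType:
   commutative semigroups with zero), m : S -> G -> S -> S the ternary
   product  m a al b = a al b,  satisfying the axioms of the paper. *)
Definition is_GammaHemiring (S G : nmodType) (m : S -> G -> S -> S) : Prop :=
  [/\ (forall (a b c : S) (al : G), m (a + b) al c = m a al c + m b al c),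
      (forall (a b c : S) (al : G), m a al (b + c) = m a al b + m a al c),
      (forall (a b : S) (al be : G), m a (al + be) b = m a al b + m a be b),
      (forall (a b c : S) (al be : G), m a al (m b be c) = m (m a al b) be c) &
      ((forall (a : S) (al : G), m 0 al a = 0 /\ m a al 0 = 0) /\
       (forall (a b : S), m a 0 b = 0 /\ m b 0 a = 0))].

Definition fuzzy_subset (R : realType) (S : Type) (mu : S -> R) : Prop :=
  forall x, 0 <= mu x <= 1.

Definition chiS (R : realType) (S : Type) : S -> R := fun _ => 1.

Definition hprod_vals (R : realType) (S G : nmodType) (m : S -> G -> S -> S)
  (mu th : S -> R) (x : S) : set R :=
  [set r | exists (n : nat) (z : S) (a b c d : 'I_n -> S) (ga de : 'I_n -> G),
     [/\ (0 < n)%N,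
         x + (\sum_(i < n) m (a i) (ga i) (b i)) + z
           = (\sum_(i < n) m (c i) (de i) (d i)) + z &
         r = \big[Num.min/1]_(i < n)
               Num.min (Num.min (mu (a i)) (mu (c i)))
                       (Num.min (th (b i)) (th (d i)))]].

(* generalized h-product; 0 if no such expression exists *)
Definition hprod (R : realType) (S G : nmodType) (m : S -> G -> S -> S)
  (mu th : S -> R) (x : S) : R :=
  if `[< hprod_vals m mu th x !=set0 >] then sup (hprod_vals m mu th x) else 0.

Definition fuzzy_hquasi_ideal (R : realType) (S G : nmodType)
  (m : S -> G -> S -> S) (mu : S -> R) : Prop :=
  [/\ fuzzy_subset mu,
      (forall x y : S, Num.min (mu x) (mu y) <= mu (x + y)),
      (forall x a b z : S, x + a + z = b + z -> Num.min (mu a) (mu b) <= mu x) &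
      (forall x : S, Num.min (hprod m mu (@chiS R S) x) (hprod m (@chiS R S) mu x)
                     <= mu x)].

Definition extension (R : realType) (S G : nmodType) (m : S -> G -> S -> S)
  (x : S) (mu : S -> R) : S -> R :=
  fun y => inf [set r | exists (s : S) (al ga : G), r = mu (m x al (m s ga y))].

From mathcomp Require Import all_boot all_order all_algebra.
From mathcomp Require Import boolp classical_sets reals.
Set Implicit Arguments. Unset Strict Implicit. Unset Printing Implicit Defensive.
Import Order.TTheory GRing.Theory Num.Theory.
Local Open Scope ring_scope.
Local Open Scope classical_set_scope.

(* For fixed [x, al, s, ga] the map [y |-> x al (s ga y)] is additive, so it
   transports the additive closure and the h-closure of [mu] to [<x,mu>].
   By associativity [x al (s ga (a gs b)) = x al ((s ga a) gs b)], hence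
   [<x,mu> b <= <x,mu> (a gs b)]: [<x,mu>] is a fuzzy left h-ideal, and such
   a [nu] dominates [chi_S o_h nu]. *)

Section HClosed.

Variables (R : realType) (S : nmodType) (nu : S -> R).
Hypothesis nu_add : forall u v, Num.min (nu u) (nu v) <= nu (u + v).
Hypothesis nu_hclosed :
  forall y a b z, y + a + z = b + z -> Num.min (nu a) (nu b) <= nu y.

Lemma hclosed_le0 (a : S) : nu a <= nu 0.
Proof. by rewrite -[nu a]minxx; apply: (nu_hclosed (z := 0)); rewrite add0r. Qed.

Lemma hclosed_sum_ge (n : nat) (F : 'I_n -> S) (r : R) :
  (0 < n)%N -> (forall i, r <= nu (F i)) -> r <= nu (\sum_(i < n) F i).
Proof.
case: n F => // n F _ rF.
apply: (big_ind (fun v => r <= nu v)) => // [|u v ru rv].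
  exact: le_trans (rF ord0) (hclosed_le0 _).
by apply: le_trans (nu_add u v); rewrite le_min ru rv.
Qed.

Variables (G : nmodType) (m : S -> G -> S -> S).
Hypothesis nu_fuzzy : fuzzy_subset nu.
Hypothesis nu_mul_ge : forall a g b, nu b <= nu (m a g b).

Lemma hprod_chiS_le (y : S) : hprod m (@chiS R S) nu y <= nu y.
Proof.
rewrite /hprod; case: ifPn => [/asboolP ne|_]; last by case/andP: (nu_fuzzy y).
apply: ge_sup => // _ [n [z [a [b [c [d [gs [ds [n_gt0 Heq ->]]]]]]]]].
set r := \big[Num.min/1]_(i < n) _.
have r_le i : r <= Num.min (nu (b i)) (nu (d i)).
  by apply: le_trans (bigmin_le _ i _) _; rewrite /chiS minxx ge_min lexx orbT.
apply: le_trans (nu_hclosed Heq); rewrite le_min.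
by apply/andP; split; apply: hclosed_sum_ge => // i;
  apply: le_trans (nu_mul_ge _ _ _); apply: le_trans (r_le i) _;
  rewrite ge_min lexx ?orbT.
Qed.

End HClosed.

Section Extension.

Variables (R : realType) (S G : nmodType) (m : S -> G -> S -> S).
Hypothesis mulDr : forall a b c al, m a al (b + c) = m a al b + m a al c.
Hypothesis mulA : forall a b c al be, m a al (m b be c) = m (m a al b) be c.
Variables (x : S) (mu : S -> R).
Hypothesis mu_fuzzy : fuzzy_subset mu.

Local Notation ext := (extension m x mu).

Lemma extension_le y s al ga : ext y <= mu (m x al (m s ga y)).
Proof.
apply: ge_inf; last by exists s, al, ga.
by exists 0 => _ [s' [al' [ga' ->]]]; case/andP: (mu_fuzzy (m x al' (m s' ga' y))).
Qed.

Lemma extension_ge y c :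
  (forall s al ga, c <= mu (m x al (m s ga y))) -> c <= ext y.
Proof.
move=> c_le; apply: lb_le_inf => [|_ [s [al [ga ->]]]]; last exact: c_le.
by exists (mu (m x 0 (m 0 0 y))), 0, 0, 0.
Qed.

Lemma fuzzy_subset_extension : fuzzy_subset ext.
Proof.
move=> y; apply/andP; split.
  by apply: extension_ge => s al ga; case/andP: (mu_fuzzy (m x al (m s ga y))).
by apply: le_trans (extension_le y 0 0 0) _; case/andP: (mu_fuzzy (m x 0 (m 0 0 y))).
Qed.

Lemma extension_mul_ge a g b : ext b <= ext (m a g b).
Proof. by apply: extension_ge => s al ga; rewrite (mulA s) extension_le. Qed.

Lemma extension_add :
  (forall u v, Num.min (mu u) (mu v) <= mu (u + v)) ->
  forall u v, Num.min (ext u) (ext v) <= ext (u + v).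
Proof.
move=> mu_add u v; apply: extension_ge => s al ga; rewrite !mulDr.
by apply: le_trans (mu_add _ _); rewrite le_min !ge_min !extension_le ?orbT.
Qed.

Lemma extension_hclosed :
  (forall y a b z, y + a + z = b + z -> Num.min (mu a) (mu b) <= mu y) ->
  forall y a b z, y + a + z = b + z -> Num.min (ext a) (ext b) <= ext y.
Proof.
move=> mu_hclosed y a b z eq_yab; apply: extension_ge => s al ga.
have eq_image : m x al (m s ga y) + m x al (m s ga a) + m x al (m s ga z)
               = m x al (m s ga b) + m x al (m s ga z).
  by rewrite -!mulDr eq_yab.
apply: le_trans (mu_hclosed _ _ _ _ eq_image).
by rewrite le_min !ge_min !extension_le ?orbT.
Qed.

End Extension.

Theorem proposition3p10 (R : realType) (S G : nmodType) (m : S -> G -> S -> S)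
  (HS : is_GammaHemiring m) (mu : S -> R) (Hmu : fuzzy_hquasi_ideal m mu) (x : S) :
  fuzzy_hquasi_ideal m (extension m x mu).
Proof.
case: HS => _ mulDr _ mulA _; case: Hmu => mu_fuzzy mu_add mu_hclosed _.
have ext_add := extension_add mulDr x mu_fuzzy mu_add.
have ext_hclosed := extension_hclosed mulDr x mu_fuzzy mu_hclosed.
split=> // [|y]; first exact: fuzzy_subset_extension.
rewrite ge_min; apply/orP; right; apply: hprod_chiS_le => //.
- exact: fuzzy_subset_extension.
- exact: extension_mul_ge.
Qed.
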